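(* Let $\phi$ be a nonautonomous random dynamical system (NRDS) on $(\Omega,\mathcal{F},\mathbb{P})$ with finite state space $X$. For $t_0\le t$ let $\Gamma(t,t_0):=\{\omega\in\Omega\mid\phi(t,t_0,x_1,\omega)=\phi(t,t_0,x_2,\omega)\text{ for all }x_1,x_2\in X\}$ and for $t\in\mathbb{R}$, $\omega\in\Omega$ let $A(t,\omega):=\bigcap_{t_0\le t}\phi(t,t_0,X,\omega)$. Consider the statements: (1) There exists $p>0$ such that for any $t\in\mathbb{R}$ there exists $t_0<t$ with $\mathbb{P}(\Gamma(t,t_0))>p$. (2) For any $t\in\mathbb{R}$, $\lim_{t_0\to-\infty}\mathbb{P}(\Gamma(t,t_0))=1$. (3) For any $t\in\mathbb{R}$, $\mathbb{P}(\{\omega\in\Omega\mid \phi(t,t_0,X,\omega)\text{ is a singleton for some }t_0<t\})=1$. (4) For all $t\in\mathbb{R}$ the sets $A(t,\omega)$ are singletons for almost all $\omega\in\Omega$. Then (2), (3), (4) are equivalent to each other and imply (1). If in addition the solutions are stochastically independent on non-overlapping intervals, i.e. $\phi(t,t_0,x,\cdot)$ is independent of $\phi(s,s_0,x,\cdot)$ whenever $[t_0,t)\cap[s_0,s)=\emptyset$, then (1) is equivalent to (2)–(4). If, moreover, the $t_0$ in (1) can be chosen such that $t-t_0$ is bounded uniformly in $t$, then the convergence in (2) has an exponential rate, and the singletons $A(t,\omega)$ also provide a global random forward attractor.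
   Context: Let $\mathbb{R}^2_{\ge}:=\{(t,s)\in\mathbb{R}^2\mid t\ge s\}$. A map $\phi:\mathbb{R}^2_\ge\times X\times\Omega\to X$ ($X$ a Polish space, here finite with the discrete topology) is an NRDS if (i) it is $(\mathcal{B}(\mathbb{R}^2_\ge)\times\mathcal{B}(X)\times\mathcal{F},\mathcal{B}(X))$-measurable; (ii) $\phi(t,t,\cdot,\omega)$ is the identity; (iii) $\phi(t,t_0,x,\omega)=\phi(t,s,\phi(s,t_0,x,\omega),\omega)$ for all $t\ge s\ge t_0$; (iv) $x\mapsto\phi(t,s,x,\omega)$ is continuous. $\phi(t,t_0,B,\omega)$ denotes the image of a set $B\subset X$. On the finite space use $d(x_1,x_2)=1$ if $x_1\neq x_2$, $0$ otherwise, and $\mathrm{dist}(A_1,A_2)=\sup_{a_1\in A_1}\inf_{a_2\in A_2}d(a_1,a_2)$. A compact nonautonomous random set $A=(A(t))_{t\in\mathbb{R}}$ (measurable subsets of $X\times\Omega$ with compact $\omega$-sections $A(t,\omega)$) that is strictly invariant, $\phi(t,t_0,A(t_0,\omega),\omega)=A(t,\omega)$ for all $t\ge t_0$ a.s., is a global random forward attractor if for each $t_0\in\mathbb{R}$, $\lim_{t\to\infty}\mathrm{dist}(\phi(t,t_0,X,\omega),A(t,\omega))=0$ a.s. *)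

From HB Require Import structures.
From mathcomp Require Import all_boot all_order all_algebra.
From mathcomp Require Import all_classical all_reals all_analysis.
Set Implicit Arguments. Unset Strict Implicit. Unset Printing Implicit Defensive.
Import Order.TTheory GRing.Theory Num.Theory.
Local Open Scope classical_set_scope.
Local Open Scope ring_scope.

Section NRDS.
Context {R : realType} {X : finType} {d : measure_display} {Omega : measurableType d}.
Implicit Types (phi : R -> R -> X -> Omega -> X) (P : probability Omega R).

(* NRDS axioms (i)-(iii).  (i): X is finite with the discrete sigma-algebra, so
   measurability of phi on R^2_>= x X x Omega amounts to measurability, for each
   x and each value y, of {(t,s,w) | t >= s, phi t s x w = y} in B(R^2) (x) F.
   (iv) (continuity in x) is automatic for the discrete topology on X. *)
Definition is_NRDS phi : Prop :=
  [/\ (forall x y : X,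
         measurable [set p : (R * R) * Omega |
                      p.1.2 <= p.1.1 /\ phi p.1.1 p.1.2 x p.2 = y]),
      (forall t x w, phi t t x w = x) &
      (forall t s t0 x w, t0 <= s -> s <= t ->
         phi t t0 x w = phi t s (phi s t0 x w) w)].

Definition img phi (t t0 : R) (w : Omega) : set X := range (fun x => phi t t0 x w).

Definition Gamma phi (t t0 : R) : set Omega :=
  [set w | forall x1 x2 : X, phi t t0 x1 w = phi t t0 x2 w].

Definition Aset phi (t : R) (w : Omega) : set X :=
  \bigcap_(t0 in [set t0 | t0 <= t]) img phi t t0 w.

Definition is_singleton (S : set X) : Prop := exists x, S = [set x].

Definition cond1 phi P : Prop :=
  exists p : R, 0 < p /\
    forall t : R, exists t0 : R, t0 < t /\ (p%:E < P (Gamma phi t t0))%E.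

Definition cond2 phi P : Prop :=
  forall t : R, P (Gamma phi t t0) @[t0 --> -oo] --> 1%E.

Definition cond3 phi P : Prop :=
  forall t : R,
    P [set w | exists t0 : R, t0 < t /\ is_singleton (img phi t t0 w)] = 1%E.

Definition cond4 phi P : Prop :=
  forall t : R, {ae P, forall w, is_singleton (Aset phi t w)}.

Definition cond1_unif phi P : Prop :=
  exists p T : R, 0 < p /\
    forall t : R, exists t0 : R,
      [/\ t0 < t, t - t0 <= T & (p%:E < P (Gamma phi t t0))%E].

(* Independence on non-overlapping intervals: the random maps
   phi(t,t0,.,.) and phi(s,s0,.,.) (random variables with values in X -> X,
   X finite) are independent whenever [t0,t) and [s0,s) are disjoint. *)
Definition indep_increments phi P : Prop :=
  forall t t0 s s0 : R, t0 <= t -> s0 <= s ->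
    [set r | t0 <= r < t] `&` [set r | s0 <= r < s] = set0 ->
    forall f g : X -> X,
      P ([set w | forall x, phi t t0 x w = f x] `&`
         [set w | forall x, phi s s0 x w = g x]) =
      (P [set w | forall x, phi t t0 x w = f x] *
       P [set w | forall x, phi s s0 x w = g x])%E.

Definition exp_rate phi P : Prop :=
  exists C lam : R, 0 < lam /\
    forall t t0 : R, t0 <= t ->
      (1 - P (Gamma phi t t0) <= (C * expR (- (lam * (t - t0))))%:E)%E.

Definition ddisc (x1 x2 : X) : R := if x1 == x2 then 0 else 1.

Definition hdist (A1 A2 : set X) : \bar R :=
  ereal_sup [set ereal_inf [set (ddisc a1 a2)%:E | a2 in A2] | a1 in A1].

(* Compactness of the (finite) sections is
   automatic in the finite discrete space X; measurability of A(t) as a subset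
   of X x Omega (discrete sigma-algebra on X) amounts to measurability of each
   section {w | x \in A(t,w)}. *)
Definition global_random_forward_attractor phi P (A : R -> Omega -> set X) : Prop :=
  [/\ (forall t (x : X), measurable [set w | A t w x]),
      (forall t0 : R, {ae P, forall w, forall t, t0 <= t ->
          (fun x => phi t t0 x w) @` A t0 w = A t w}) &
      (forall t0 : R, {ae P, forall w,
          hdist (img phi t t0 w) (A t w) @[t --> +oo] --> 0%E})].

End NRDS.

From HB Require Import structures.
From mathcomp Require Import all_boot all_order all_algebra.
From mathcomp Require Import all_classical all_reals all_analysis.
From mathcomp Require Import ring lra.

(* Synchronization is monotone: if all solutions started at t0 have merged by
   time t, then so have those started at any earlier time, and they stay merged
   afterwards.  Hence Gamma(t, t0) increases, as t0 -> -oo, to the event that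
   phi(t, t0, X, w) is a singleton for some t0 < t, and continuity of P from
   below gives (2) <-> (3).  As X is finite, the images phi(t, t0, X, w), which
   shrink as t0 decreases, are eventually constant, equal to A(t, w); this
   gives (3) <-> (4).  A path which fails to synchronize on [t0, t] fails on
   every piece of a subdivision of [t0, t]; under independence on disjoint
   intervals, n pieces on which (1) holds give P(~ Gamma(t, t0)) <= (1 - p)^n.
   This yields (3), and an exponential rate when the pieces have bounded
   length.  Then almost every w lies in some Gamma(t, t0), after which
   phi(t, t0, X, w) = A(t, w) is a single point: A is a forward attractor. *)

Set Implicit Arguments. Unset Strict Implicit. Unset Printing Implicit Defensive.
Import Order.TTheory GRing.Theory Num.Theory.
Local Open Scope classical_set_scope.
Local Open Scope ring_scope.

Section measure_independent_partitions.
Context d (T : measurableType d) (R : realType) (mu : {measure set T -> \bar R}).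

Lemma measure_bigcupI_indep (I J : choiceType) (D : set I) (D' : set J)
    (E : I -> set T) (F : J -> set T) :
  finite_set D -> finite_set D' -> trivIset D E -> trivIset D' F ->
  (forall i, D i -> measurable (E i)) -> (forall j, D' j -> measurable (F j)) ->
  (forall i j, D i -> D' j -> mu (E i `&` F j) = mu (E i) * mu (F j))%E ->
  mu ((\bigcup_(i in D) E i) `&` \bigcup_(j in D') F j) =
  (mu (\bigcup_(i in D) E i) * mu (\bigcup_(j in D') F j))%E.
Proof.
move=> finD finD' tE tF mE mF EF.
have mUF : measurable (\bigcup_(j in D') F j) by exact: fin_bigcup_measurable.
rewrite setI_bigcupl measure_fin_bigcup //; last 2 first.
- exact: trivIset_setIr.
- by move=> i Di; exact: measurableI (mE i Di) mUF.
rewrite [in RHS]measure_fin_bigcup // [mu (\bigcup_(j in D') F j)]measure_fin_bigcup //.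
rewrite ge0_mule_fsuml //.
apply: eq_fsbigr => i /[!inE] Di.
rewrite setI_bigcupr measure_fin_bigcup //; last 2 first.
- exact: trivIset_setIl.
- by move=> j D'j; apply: measurableI; [exact: mE|exact: mF].
rewrite ge0_mule_fsumr //; apply: eq_fsbigr => j /[!inE] D'j; exact: EF.
Qed.

End measure_independent_partitions.

Section probability_complement.
Context d (T : measurableType d) (R : realType) (P : probability T R).
Local Open Scope ereal_scope.

Lemma probability_setC0 (A : set T) : measurable A -> P (~` A) = 0 -> P A = 1.
Proof.
move=> mA; rewrite probability_setC // -(fineK (fin_num_measure P _ mA)) -EFinB.
by move=> [] /eqP; rewrite subr_eq0 => /eqP <-.
Qed.

Lemma ae_probability1 (A : set T) :
  measurable A -> {ae P, forall x, A x} <-> P A = 1.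
Proof.
move=> mA; change (P.-negligible (~` A) <-> P A = 1).
rewrite negligibleP; last exact: measurableC.
change (P (~` A) = 0 <-> P A = 1).
split; first exact: probability_setC0.
by rewrite probability_setC // => ->; rewrite subee.
Qed.

Lemma probability_gt_setC_le (A : set T) (p : R) : measurable A ->
  p%:E < P A -> P (~` A) <= (1 - p)%:E.
Proof.
move=> mA; rewrite probability_setC // -(fineK (fin_num_measure P _ mA)).
by rewrite -EFinB lte_fin lee_fin => pA; lra.
Qed.

Lemma probability_gt_lt1 (A : set T) (p : R) : measurable A -> p%:E < P A -> (p < 1)%R.
Proof. by move=> mA pA; rewrite -lte_fin (lt_le_trans pA) // probability_le1. Qed.

End probability_complement.

Section monotone_limit_at_ninfty.
Context {R : realType}.

Lemma truncn_cvgNy (t : R) : Num.truncn (t - x) @[x --> -oo] --> \oo.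
Proof.
apply/cvgnyPge => n; near=> x.
have xn : x <= t - n%:R by near: x; apply: nbhs_ninfty_le; exact: num_real.
by rewrite truncn_ge_nat; have := ler0n R n; lra.
Unshelve. all: by end_near. Qed.

Lemma nonincreasing_cvgNy (f : R -> \bar R) (t : R) (l : \bar R) :
  (forall x y, x <= y -> y <= t -> (f y <= f x)%E) -> (forall x, x <= t -> (f x <= l)%E) ->
  f (t - n%:R) @[n --> \oo] --> l -> f x @[x --> -oo] --> l.
Proof.
move=> f_noninc f_le f_cvg.
have lower_cvg : f (t - (Num.truncn (t - x))%:R) @[x --> -oo] --> l.
  exact: cvg_comp (truncn_cvgNy t) f_cvg.
apply: squeeze_cvge lower_cvg (cvg_cst l); near=> x.
have xt : x <= t by near: x; apply: nbhs_ninfty_le; exact: num_real.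
have trunc_le : (Num.truncn (t - x))%:R <= t - x by rewrite truncn_le subr_ge0.
by rewrite f_le // andbT; apply: f_noninc; have := ler0n R (Num.truncn (t - x)); lra.
Unshelve. all: by end_near. Qed.

End monotone_limit_at_ninfty.

Section iterates.
Context {R : realFieldType}.

Lemma iter_le (f : R -> R) : (forall s, f s <= s) -> forall n t, iter n f t <= t.
Proof. by move=> f_le; elim=> //= n IH t; exact: le_trans (f_le _) (IH t). Qed.

Lemma iter_ge (f : R -> R) (T : R) : (forall s, s - T <= f s) ->
  forall n t, t - n%:R * T <= iter n f t.
Proof.
move=> f_ge; elim=> [|n IH] t /=; first by rewrite mul0r subr0.
by have := f_ge (iter n f t); have := IH t; rewrite -addn1 natrD mulrDl mul1r; lra.
Qed.

End iterates.

Section geometric.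
Context {R : realType}.

Lemma le_geometric_le0 (x : \bar R) (q : R) :
  0 <= q < 1 -> (forall n, x <= (q ^+ n)%:E)%E -> (x <= 0)%E.
Proof.
move=> /andP[q0 q1] xq.
have qn0 : (q ^+ n)%:E @[n --> \oo] --> 0%E.
  by apply: cvg_EFin; [exact: nearW|apply: cvg_expr; rewrite ger0_norm].
by apply: cvge_to_ge qn0 _; exact: nearW.
Qed.

Lemma geometric_le_expR (q T x : R) : 0 < q < 1 -> 0 < T -> 0 <= x ->
  q ^+ Num.truncn (x / T) <= q^-1 * expR (- (- ln q / T * x)).
Proof.
move=> /andP[q0 q1] T0 x0.
have lnq0 : ln q < 0 by rewrite ln_lt0 // q0.
have y0 : 0 <= x / T by rewrite divr_ge0 // ltW.
have n_gt : x / T < (Num.truncn (x / T)).+1%:R := truncnS_gt _.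
have -> : q ^+ Num.truncn (x / T) = expR ((Num.truncn (x / T))%:R * ln q).
  by rewrite expRM_natl lnK // posrE.
have -> : q^-1 = expR (- ln q) by rewrite expRN lnK // posrE.
rewrite -expRD ler_expR.
have -> : - (- ln q / T * x) = ln q * (x / T) by ring.
by move: n_gt; rewrite -addn1 natrD; nra.
Qed.

End geometric.

Section nrds.
Context {R : realType} {X : finType} {d : measure_display} {Omega : measurableType d}.
Variable phi : R -> R -> X -> Omega -> X.
Hypothesis phi_nrds : is_NRDS phi.

Lemma phi_cocycle t s t0 x w : t0 <= s -> s <= t ->
  phi t t0 x w = phi t s (phi s t0 x w) w.
Proof. by case: phi_nrds => _ _; apply. Qed.

Lemma measurable_phi_eq t s x y : s <= t -> measurable [set w | phi t s x w = y].
Proof.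
move=> st; case: phi_nrds => /(_ x y) mphi _ _.
rewrite (_ : [set w | _] =
    xsection [set p | p.1.2 <= p.1.1 /\ phi p.1.1 p.1.2 x p.2 = y] (t, s)).
  exact: measurable_xsection.
apply/seteqP; split => w; rewrite /xsection /= in_setE //=; by case.
Qed.

Lemma sub_Gamma_start t s s' : s' <= s -> s <= t -> Gamma phi t s `<=` Gamma phi t s'.
Proof. by move=> s's st w G x1 x2; rewrite !(phi_cocycle _ _ s's st); exact: G. Qed.

Lemma sub_Gamma_end t s s' : s' <= s -> s <= t -> Gamma phi s s' `<=` Gamma phi t s'.
Proof. by move=> s's st w G x1 x2; rewrite !(phi_cocycle _ _ s's st) (G x1 x2). Qed.

Definition map_event t s (f : {ffun X -> X}) := [set w | forall x, phi t s x w = f x].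

Definition nonconstant (f : {ffun X -> X}) := exists x1 x2, f x1 <> f x2.

Lemma measurable_map_event t s f : s <= t -> measurable (map_event t s f).
Proof.
move=> st; rewrite (_ : map_event t s f = \bigcap_x [set w | phi t s x w = f x]).
  by apply: fin_bigcap_measurable => [|x _]; [exact: finite_finset|exact: measurable_phi_eq].
by apply/seteqP; split => w /= fw x; [move=> _; exact: fw|exact: fw x I].
Qed.

Lemma trivIset_map_event (D : set {ffun X -> X}) t s : trivIset D (map_event t s).
Proof. by move=> f g _ _ [w [fw gw]]; apply/ffunP => x; rewrite -fw -gw. Qed.

Lemma setC_Gamma t s : ~` Gamma phi t s = \bigcup_(f in nonconstant) map_event t s f.
Proof.
apply/seteqP; split => w.
  move=> /existsNP[x1 /existsNP[x2 ne]]; exists [ffun x => phi t s x w].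
    by exists x1, x2; rewrite !ffunE.
  by move=> x; rewrite ffunE.
by move=> [f [x1 [x2 ne]] fw] G; apply: ne; rewrite -!fw (G x1 x2).
Qed.

Lemma measurable_Gamma t s : s <= t -> measurable (Gamma phi t s).
Proof.
move=> st; rewrite -[Gamma _ _ _]setCK setC_Gamma; apply: measurableC.
apply: fin_bigcup_measurable => [|f _]; [exact: finite_finset|exact: measurable_map_event].
Qed.

Lemma img_comp t s t0 w : s <= t0 -> t0 <= t ->
  (fun x => phi t t0 x w) @` img phi t0 s w = img phi t s w.
Proof.
move=> st0 t0t; apply/seteqP; split => y.
  by move=> [_ [x _ <-] <-]; exists x => //; rewrite (phi_cocycle x w st0 t0t).
by move=> [x _ <-]; exists (phi t0 s x w); [exists x|rewrite (phi_cocycle x w st0 t0t)].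
Qed.

Lemma sub_img_start t s s' w : s' <= s -> s <= t -> img phi t s' w `<=` img phi t s w.
Proof. by move=> s's st; rewrite -(img_comp w s's st) => y [x _ <-]; exists x. Qed.

Definition img_fset t s w : {set X} := [set phi t s x w | x : X].

Lemma img_fsetP t s w y : reflect (img phi t s w y) (y \in img_fset t s w).
Proof. by apply: (iffP imsetP) => [[x _ ->]|[x _ <-]]; exists x. Qed.

Lemma img_stabilizes t w :
  exists2 s, s <= t & forall s', s' <= s -> img phi t s' w = img phi t s w.
Proof.
pose card_at n := `[< exists2 s, s <= t & #|img_fset t s w| = n >].
have card_ex : exists n, card_at n by exists #|img_fset t t w|; apply/asboolP; exists t.
case: (ex_minnP card_ex) => _ /asboolP[s st <-] card_min.
exists s => // s' s's.
have fset_eq : img_fset t s' w = img_fset t s w.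
  apply/eqP; rewrite eqEcard; apply/andP; split.
    by apply/fintype.subsetP => y /img_fsetP/(sub_img_start s's st)/img_fsetP.
  by apply: card_min; apply/asboolP; exists s' => //; exact: le_trans s's st.
apply/seteqP; split => y /img_fsetP y_img; apply/img_fsetP;
  by [rewrite -fset_eq|rewrite fset_eq].
Qed.

Lemma Aset_sub_img t t0 w : t0 <= t -> Aset phi t w `<=` img phi t t0 w.
Proof. by move=> t0t y; apply. Qed.

Lemma Aset_eventually t w :
  exists2 s, s <= t & forall s', s' <= s -> img phi t s' w = Aset phi t w.
Proof.
have [s st img_s] := img_stabilizes t w; exists s => // s' s's.
rewrite img_s //; apply/seteqP; split => [y ys t1 /= t1t|y /(_ s st)//].
have [t1s|st1] := leP t1 s; first by rewrite img_s.
exact: sub_img_start (ltW st1) t1t _ ys.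
Qed.

Lemma Aset_invariant t0 t w : t0 <= t ->
  (fun x => phi t t0 x w) @` Aset phi t0 w = Aset phi t w.
Proof.
move=> t0t; have [s0 s0t0 img_s0] := Aset_eventually t0 w.
have [s1 s1t img_s1] := Aset_eventually t w.
have ss0 : Num.min s0 s1 <= s0 by rewrite ge_min lexx.
have ss1 : Num.min s0 s1 <= s1 by rewrite ge_min lexx orbT.
by rewrite -(img_s0 _ ss0) -(img_s1 _ ss1) img_comp // (le_trans ss0).
Qed.

Lemma measurable_img t s y : s <= t -> measurable [set w | img phi t s w y].
Proof.
move=> st; rewrite (_ : [set w | _] = \bigcup_x [set w | phi t s x w = y]).
  apply: fin_bigcup_measurable => [|x _]; first exact: finite_finset.
  exact: measurable_phi_eq.
by apply/seteqP; split => w [x _ xy]; exists x.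
Qed.

Lemma measurable_Aset t y : measurable [set w | Aset phi t w y].
Proof.
have tn_le n : t - n%:R <= t by have := ler0n R n; lra.
rewrite (_ : [set w | _] = \bigcap_n [set w | img phi t (t - n%:R) w y]).
  by apply: bigcapT_measurable => n; exact: measurable_img.
apply/seteqP; split => w Ay; first by move=> n _; exact: Ay _ (tn_le n).
move=> t1 /= t1t; have := truncnS_gt (t - t1) => t1_gt.
by apply: sub_img_start _ t1t _ (Ay (Num.truncn (t - t1)).+1 I); lra.
Qed.

Variable x0 : X.

Lemma Gamma_singletonP t t0 w : Gamma phi t t0 w <-> is_singleton (img phi t t0 w).
Proof.
split => [G|[a img_a] x1 x2].
  exists (phi t t0 x0 w); apply/seteqP; split => [y [x _ <-]|y ->]; last by exists x0.
  exact: G.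
have img_x x : img phi t t0 w (phi t t0 x w) by exists x.
by move: (img_x x1) (img_x x2); rewrite img_a => -> ->.
Qed.

Lemma Aset_neq0 t w : Aset phi t w !=set0.
Proof.
have [s _ img_s] := Aset_eventually t w.
by rewrite -(img_s s (lexx s)); exists (phi t s x0 w), x0.
Qed.

Lemma Aset_img_singleton t t0 w a : t0 <= t ->
  img phi t t0 w = [set a] -> Aset phi t w = [set a].
Proof.
move=> t0t img_a; have := Aset_sub_img (w := w) t0t; rewrite img_a.
by case/subset_set1 => // A0; have := Aset_neq0 t w; rewrite A0 => -[].
Qed.

Definition synchronized t := [set w | exists2 t0, t0 < t & Gamma phi t t0 w].

Lemma Aset_singletonP t w : is_singleton (Aset phi t w) <-> synchronized t w.
Proof.
split => [[a Aa]|[t0 t0t /Gamma_singletonP[a img_a]]].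
  have [s st img_s] := Aset_eventually t w.
  exists (s - 1); first lra.
  by apply/Gamma_singletonP; exists a; rewrite img_s //; lra.
by exists a; exact: Aset_img_singleton (ltW t0t) img_a.
Qed.

Lemma sub_Gamma_synchronized t s : s <= t -> Gamma phi t s `<=` synchronized t.
Proof.
move=> st w G; exists (s - 1); first lra.
by apply: sub_Gamma_start _ st _ G; lra.
Qed.

Lemma synchronizedE t : synchronized t = \bigcup_n Gamma phi t (t - n%:R).
Proof.
apply/seteqP; split => [w [t0 t0t G]|w [n _]]; last first.
  by apply: sub_Gamma_synchronized; have := ler0n R n; lra.
exists (Num.truncn (t - t0)).+1 => //.
have t0_ge : t - (Num.truncn (t - t0)).+1%:R <= t0 by have := truncnS_gt (t - t0); lra.
exact: sub_Gamma_start t0_ge (ltW t0t) _ G.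
Qed.

Lemma measurable_synchronized t : measurable (synchronized t).
Proof.
rewrite synchronizedE; apply: bigcupT_measurable => n.
by apply: measurable_Gamma; have := ler0n R n; lra.
Qed.

Lemma hdist_set1 (a : X) : hdist (R := R) [set a] [set a] = 0%E.
Proof. by rewrite /hdist !image_set1 ereal_inf1 ereal_sup1 /ddisc eqxx. Qed.

Lemma hdist_img_Aset_cvg t0 t1 w : t0 <= t1 -> Gamma phi t1 t0 w ->
  hdist (R := R) (img phi t t0 w) (Aset phi t w) @[t --> +oo] --> 0%E.
Proof.
move=> t0t1 G; apply: cvg_near_cst; near=> t.
have t1t : t1 <= t by near: t; exact: nbhs_pinfty_ge (num_real t1).
have [a img_a] := (Gamma_singletonP t t0 w).1 (sub_Gamma_end t0t1 t1t G).
by rewrite img_a (Aset_img_singleton (le_trans t0t1 t1t) img_a) hdist_set1.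
Unshelve. all: by end_near. Qed.

Variable P : probability Omega R.

Lemma measure_Gamma_cvgNy t : P (Gamma phi t t0) @[t0 --> -oo] --> P (synchronized t).
Proof.
apply: (@nonincreasing_cvgNy _ _ t).
- move=> x y xy yt; apply: le_measure; rewrite ?inE.
  + exact: measurable_Gamma.
  + exact: measurable_Gamma (le_trans xy yt).
  + exact: sub_Gamma_start.
- move=> x xt; apply: le_measure; rewrite ?inE.
  + exact: measurable_Gamma.
  + exact: measurable_synchronized.
  + exact: sub_Gamma_synchronized.
rewrite synchronizedE; apply: nondecreasing_cvg_mu.
- by move=> n; apply: measurable_Gamma; rewrite lerBlDr lerDl.
- by rewrite -synchronizedE; exact: measurable_synchronized.
move=> n m nm; rewrite subsetEset; apply: sub_Gamma_start.
  by rewrite lerD2l lerN2 ler_nat.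
by rewrite lerBlDr lerDl.
Qed.

Lemma singleton_img_setE t :
  [set w | exists t0, t0 < t /\ is_singleton (img phi t t0 w)] = synchronized t.
Proof.
apply/seteqP; split => w.
  by move=> [t0 [t0t /Gamma_singletonP G]]; exists t0.
by move=> [t0 t0t /Gamma_singletonP sing]; exists t0.
Qed.

Lemma singleton_Aset_setE t : [set w | is_singleton (Aset phi t w)] = synchronized t.
Proof. by apply/seteqP; split => w /Aset_singletonP. Qed.

Lemma cond2_cond3 : cond2 phi P <-> cond3 phi P.
Proof.
split => sync t.
  rewrite singleton_img_setE.
  apply: (cvg_unique (F := P (Gamma phi t t0) @[t0 --> -oo]) (@ereal_hausdorff R)).
    exact: measure_Gamma_cvgNy.
  exact: sync.
by rewrite -(sync t) singleton_img_setE; exact: measure_Gamma_cvgNy.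
Qed.

Lemma cond3_cond4 : cond3 phi P <-> cond4 phi P.
Proof.
have mA t : measurable [set w | is_singleton (Aset phi t w)].
  by rewrite singleton_Aset_setE; exact: measurable_synchronized.
split => sync t.
  by apply/(ae_probability1 _ (mA t)); rewrite singleton_Aset_setE -singleton_img_setE.
by have /(ae_probability1 _ (mA t)) := sync t; rewrite singleton_Aset_setE -singleton_img_setE.
Qed.

Lemma cond2_cond1 : cond2 phi P -> cond1 phi P.
Proof.
move=> sync; exists 2^-1; split => // t.
have half_lt1 : ((2^-1 : R)%:E < 1)%E by rewrite lte_fin invf_lt1 // ltr1n.
have : \forall t0 \near -oo, t0 < t /\ ((2^-1)%:E < P (Gamma phi t t0))%E.
  near=> t0; split; near: t0; first by apply: nbhs_ninfty_lt; exact: num_real.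
  exact: sync t _ (open_ereal_gt' half_lt1).
by case/filter_ex => t0 [t0t Gt0]; exists t0.
Unshelve. all: by end_near. Qed.

Hypothesis indep : indep_increments phi P.

Lemma indep_setC_Gamma t s s' : s' <= s -> s <= t ->
  P (~` Gamma phi t s `&` ~` Gamma phi s s') = (P (~` Gamma phi t s) * P (~` Gamma phi s s'))%E.
Proof.
move=> s's st; rewrite !setC_Gamma.
apply: measure_bigcupI_indep; try exact: finite_finset.
- exact: trivIset_map_event.
- exact: trivIset_map_event.
- by move=> f _; exact: measurable_map_event.
- by move=> f _; exact: measurable_map_event.
move=> f g _ _; apply: indep => //.
by apply/seteqP; split => // r [/andP[sr _] /andP[_ rs]]; move: (lt_le_trans rs sr); rewrite ltxx.
Qed.

Lemma measure_setC_Gamma_submult t s s' : s' <= s -> s <= t ->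
  (P (~` Gamma phi t s') <= P (~` Gamma phi t s) * P (~` Gamma phi s s'))%E.
Proof.
move=> s's st; rewrite -indep_setC_Gamma //.
apply: le_measure; rewrite ?inE.
- exact/measurableC/measurable_Gamma/(le_trans s's st).
- by apply: measurableI; apply/measurableC/measurable_Gamma.
move=> w nG; split => G; apply: nG.
  exact: sub_Gamma_start s's st _ G.
exact: sub_Gamma_end s's st _ G.
Qed.

Lemma measure_setC_Gamma_iter (step : R -> R) (q : R) :
  (forall s, step s <= s) -> (forall s, P (~` Gamma phi s (step s)) <= q%:E)%E ->
  forall n t, (P (~` Gamma phi t (iter n step t)) <= (q ^+ n)%:E)%E.
Proof.
move=> step_le step_q; elim=> [|n IH] t /=.
  by rewrite expr0; apply: probability_le1; exact/measurableC/measurable_Gamma/lexx.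
apply: le_trans (measure_setC_Gamma_submult (step_le _) (iter_le step_le n t)) _.
by rewrite exprSr EFinM; apply: lee_pmul.
Qed.

Lemma cond1_cond3 : cond1 phi P -> cond3 phi P.
Proof.
move=> [p [p0 /choice[step step_spec]]] t.
have step_le s : step s <= s by case: (step_spec s) => /ltW.
have step_q s := probability_gt_setC_le (measurable_Gamma (step_le s)) (step_spec s).2.
have p1 := probability_gt_lt1 (measurable_Gamma (step_le t)) (step_spec t).2.
rewrite singleton_img_setE; apply: probability_setC0; first exact: measurable_synchronized.
apply/eqP; rewrite -measure_le0; apply: (@le_geometric_le0 _ _ (1 - p)).
  by apply/andP; split; lra.
move=> n; apply: le_trans (measure_setC_Gamma_iter step_le step_q n t).
apply: le_measure; rewrite ?inE.
- exact/measurableC/measurable_synchronized.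
- exact/measurableC/measurable_Gamma/iter_le.
by apply: subsetC; exact/sub_Gamma_synchronized/iter_le.
Qed.

Lemma uniform_geometric_decay : cond1_unif phi P ->
  exists p T : R, [/\ 0 < p < 1, 0 < T & forall n t0 t, t0 + n%:R * T <= t ->
    (P (~` Gamma phi t t0) <= ((1 - p) ^+ n)%:E)%E].
Proof.
move=> [p [T [p0 /choice[step step_spec]]]].
have step_lt s : step s < s by case: (step_spec s).
have step_le s : step s <= s by exact/ltW.
have step_ge s : s - T <= step s by case: (step_spec s) => _ ? _; lra.
have step_q s : (P (~` Gamma phi s (step s)) <= (1 - p)%:E)%E.
  by case: (step_spec s) => _ _; apply: probability_gt_setC_le; exact: measurable_Gamma.
exists p, T; split.
- apply/andP; split => //; case: (step_spec 0) => _ _.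
  by apply: probability_gt_lt1; exact: measurable_Gamma.
- by have := step_lt 0; have := step_ge 0; lra.
move=> n t0 t tn.
have t0s : t0 <= iter n step t by have := iter_ge step_ge n t; lra.
apply: le_trans (measure_setC_Gamma_iter step_le step_q n t).
apply: le_measure; rewrite ?inE.
- exact/measurableC/measurable_Gamma/(le_trans t0s)/iter_le.
- exact/measurableC/measurable_Gamma/iter_le.
by apply: subsetC; apply: sub_Gamma_start t0s (iter_le step_le n t).
Qed.

Section geometric_decay.
Variables (p T : R).
Hypotheses (p01 : 0 < p < 1) (T_gt0 : 0 < T).
Hypothesis decay : forall n t0 t, t0 + n%:R * T <= t ->
  (P (~` Gamma phi t t0) <= ((1 - p) ^+ n)%:E)%E.

Lemma exp_rate_of_decay : exp_rate phi P.
Proof.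
have [p0 p1] := andP p01.
exists (1 - p)^-1, (- ln (1 - p) / T); split.
  by rewrite divr_gt0 // oppr_gt0 ln_lt0 //; apply/andP; split; lra.
move=> t t0 t0t; rewrite -probability_setC; last exact: measurable_Gamma.
pose n := Num.truncn ((t - t0) / T).
have n_le : n%:R <= (t - t0) / T by rewrite truncn_le divr_ge0 // ?subr_ge0 // ltW.
have tn : t0 + n%:R * T <= t by move: n_le; rewrite ler_pdivlMr //; lra.
apply: le_trans (decay tn) _; rewrite lee_fin.
by apply: geometric_le_expR => //; [apply/andP; split|]; lra.
Qed.

Lemma attractor_of_decay : global_random_forward_attractor phi P (Aset phi).
Proof.
have [p0 p1] := andP p01.
split => [t y|t0|t0]; first exact: measurable_Aset.
  by apply: aeW => w t t0t; exact: Aset_invariant.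
have t0_le n : t0 <= t0 + n%:R * T by have := mulr_ge0 (ler0n R n) (ltW T_gt0); lra.
pose N := \bigcap_n ~` Gamma phi (t0 + n%:R * T) t0.
have mN : measurable N.
  by apply: bigcapT_measurable => n; exact/measurableC/measurable_Gamma.
exists N; split => //.
  apply/eqP; rewrite -measure_le0; apply: (@le_geometric_le0 _ _ (1 - p)).
    by apply/andP; split; lra.
  move=> n; apply: le_trans (decay (lexx (t0 + n%:R * T))).
  apply: le_measure; rewrite ?inE //; first exact/measurableC/measurable_Gamma.
  by move=> w /(_ n I).
move=> w /= not_cvg n _ G; apply: not_cvg; exact: hdist_img_Aset_cvg (t0_le n) G.
Qed.

End geometric_decay.

End nrds.

Theorem theorem9 (R : realType) (X : finType) (x0 : X)
  (d : measure_display) (Omega : measurableType d)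
  (P : probability Omega R) (phi : R -> R -> X -> Omega -> X)
  (Hphi : is_NRDS phi) :
  [/\ (cond2 phi P <-> cond3 phi P),
      (cond3 phi P <-> cond4 phi P),
      (cond2 phi P -> cond1 phi P),
      (indep_increments phi P -> cond1 phi P -> cond2 phi P) &
      (indep_increments phi P -> cond1_unif phi P ->
         exp_rate phi P /\ global_random_forward_attractor phi P (Aset phi))].
Proof.
split.
- exact: cond2_cond3.
- exact: cond3_cond4.
- exact: cond2_cond1.
- by move=> indep /(cond1_cond3 Hphi x0 indep)/(cond2_cond3 Hphi x0).
move=> indep /(uniform_geometric_decay Hphi indep)[p [T [p01 T_gt0 decay]]].
by split; [exact: exp_rate_of_decay decay|exact: attractor_of_decay decay].
Qed.
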